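(* Let $\Gamma$ be a regular bipartite simple graph. Then $E(\Gamma)=E(\bar\Gamma)$ if and only if $\Gamma\cong C_4$ or $\Gamma\cong Cr(t)$ for some $t\ge 2$. Moreover, in these cases $\Gamma$ and $\bar\Gamma$ are both integral and are not isospectral to each other.
   Context: The energy $E(\Gamma)$ is the sum of the absolute values of the adjacency eigenvalues (with multiplicity); $\bar\Gamma$ is the complement of $\Gamma$. $C_4$ is the 4-cycle. The crown graph $Cr(t)$ is obtained from the complete bipartite graph $K_{t,t}$ by deleting a perfect matching (equivalently $Cr(t)=K_2\otimes K_t$, Kronecker product). A graph is integral if all its adjacency eigenvalues are integers; two graphs are isospectral if their adjacency spectra (with multiplicities) coincide. *)

From HB Require Import structures.
From mathcomp Require Import all_boot all_order all_algebra all_field.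
Set Implicit Arguments. Unset Strict Implicit. Unset Printing Implicit Defensive.
Import Order.TTheory GRing.Theory Num.Theory.
Local Open Scope ring_scope.

Definition simple_graph (T : finType) (e : rel T) : Prop :=
  (forall x y, e x y = e y x) /\ (forall x, ~~ e x x).

Definition regular_graph (T : finType) (e : rel T) : Prop :=
  exists k : nat, forall x : T, #|[set y | e x y]| = k.

Definition bipartite_graph (T : finType) (e : rel T) : Prop :=
  exists A : {set T}, forall x y, e x y -> (x \in A) != (y \in A).

Definition compl_graph (T : finType) (e : rel T) : rel T :=
  fun x y => (x != y) && ~~ e x y.

Definition adj_mx (T : finType) (e : rel T) : 'M[algC]_#|T| :=
  \matrix_(i, j) (e (enum_val i) (enum_val j))%:R.

(* adjacency spectrum, with multiplicities: the roots of the characteristic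
   polynomial (which is monic, so it equals \prod_(z <- spectrum) ('X - z)) *)
Definition spectrum (T : finType) (e : rel T) : seq algC :=
  sval (closed_field_poly_normal (char_poly (adj_mx e))).

Definition energy (T : finType) (e : rel T) : algC :=
  \sum_(z <- spectrum e) `|z|.

Definition integral_graph (T : finType) (e : rel T) : Prop :=
  all (fun z => z \is a Num.int) (spectrum e).

Definition isospectral (T S : finType) (e : rel T) (f : rel S) : Prop :=
  perm_eq (spectrum e) (spectrum f).

Definition graph_iso (T S : finType) (e : rel T) (f : rel S) : Prop :=
  exists g : T -> S, bijective g /\ forall x y, e x y = f (g x) (g y).

Definition C4 : rel 'I_4 :=
  fun i j => ((i.+1 %% 4)%N == j) || ((j.+1 %% 4)%N == i).

(* crown graph Cr(t) = K_2 (x) K_t on bool * 'I_t *)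
Definition crown (t : nat) : rel (bool * 'I_t) :=
  fun u v => (u.1 != v.1) && (u.2 != v.2).
Arguments crown t : clear implicits.

(* A k-regular graph on n vertices has the all-ones matrix J commuting with its
   adjacency matrix A, so the complement J - I - A has spectrum n - 1 - k together
   with -1 - z for the other eigenvalues z of A; bipartiteness makes the spectrum
   symmetric.  Hence
     2 (E(complement) - E) = 2n - 4(k + 1) + sum_z (|1 + z| + |1 - z| - 2|z|),
   where every summand is nonnegative and vanishes when z is real with |z| >= 1
   (for k = 0 the summand of the eigenvalue 0 = k is already 2).  For k > 0 both sides
   have n/2 vertices and k <= n/2, so equality forces k = n/2 - 1 or k = n/2.  In the
   first case every vertex has a unique non-neighbour on the other side, the graph is
   Cr(n/2) with eigenvalues +-1 and +-k, and equality holds; in the second it is K_{k,k},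
   with spectrum k, -k and zeros, and equality holds iff k = 2, i.e. for C4.  In both
   cases n - 1 - k is an eigenvalue of the complement but not of the graph. *)

From HB Require Import structures.
From mathcomp Require Import all_boot all_order all_algebra all_field.
From mathcomp Require Import ring zify.
Set Implicit Arguments. Unset Strict Implicit. Unset Printing Implicit Defensive.
Import Order.TTheory GRing.Theory Num.Theory.
Local Open Scope ring_scope.

Lemma horner_char_poly (R : comNzRingType) n (A : 'M[R]_n) a :
  (char_poly A).[a] = \det (a%:M - A).
Proof.
symmetry; rewrite /char_poly /= horner_sum; apply: eq_bigr => s _.
rewrite hornerM horner_exp !hornerE; congr (_ * _).
rewrite (big_morph _ (fun p q => hornerM p q a) (hornerC 1 a)).
by apply: eq_bigr => i _; rewrite !mxE !(hornerE, hornerMn).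
Qed.

Lemma det_add1_mulmx (R : comNzRingType) n (u : 'cV[R]_n) (w : 'rV[R]_n) :
  \det (1%:M + u *m w) = 1 + (w *m u) 0 0.
Proof.
pose P : 'M_(1 + n) := block_mx 1%:M (- w) u 1%:M.
pose Q : 'M_(1 + n) := block_mx 1%:M w 0 1%:M.
have PQ : P *m Q = block_mx 1%:M 0 u (1%:M + u *m w).
  by rewrite mulmx_block !mulmx1 !mul1mx !mulmx0 !addr0 subrr addrC.
have QP : Q *m P = block_mx (1%:M + w *m u) 0 u 1%:M.
  by rewrite mulmx_block !mulmx1 !mul1mx !mul0mx !add0r addNr.
have : \det (P *m Q) = \det (Q *m P) by rewrite !det_mulmx mulrC.
by rewrite PQ QP !det_lblock !det1 mul1r mulr1 det_mx11 !mxE => ->.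
Qed.

Lemma horner_inj (R : numDomainType) (p q : {poly R}) :
  (forall x, p.[x] = q.[x]) -> p = q.
Proof.
move=> pq; apply/eqP; rewrite -subr_eq0; apply/eqP.
apply: (@roots_geq_poly_eq0 _ _ [seq i%:R | i <- iota 0 (size (p - q))]).
- by apply/allP => x _; rewrite /root hornerD hornerN pq subrr.
- by rewrite map_inj_uniq ?iota_uniq // => i j /eqP; rewrite eqr_nat => /eqP.
- by rewrite size_map size_iota.
Qed.

Lemma sumr_indicator (T : finType) (R : pzSemiRingType) (P : pred T) (F : T -> R) :
  \sum_x (P x)%:R * F x = \sum_(x | P x) F x.
Proof. by rewrite [RHS]big_mkcond; apply: eq_bigr => x _; rewrite mulr_natl mulrb. Qed.

Lemma sumr_natr_card (T : finType) (R : pzSemiRingType) (P : pred T) :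
  \sum_x ((P x)%:R : R) = #|[set x | P x]|%:R.
Proof.
under eq_bigr do rewrite -[_%:R]mulr1.
by rewrite sumr_indicator sumr_const cardsE.
Qed.

Lemma natr_addr_ge0_eq_leq (R : numDomainType) (a b : nat) (X : R) :
  0 <= X -> a%:R + X = b%:R -> (a <= b)%N.
Proof. by move=> X_ge0 abX; rewrite -(ler_nat R) -abX lerDl. Qed.

Lemma eqr_natN (R : numDomainType) (a b : nat) : (a%:R == - b%:R :> R) = (a + b == 0)%N.
Proof. by rewrite -subr_eq0 opprK -natrD pnatr_eq0. Qed.

Lemma sumr_count (T : Type) (R : pzSemiRingType) (s : seq T) (P : pred T) :
  \sum_(z <- s) ((P z)%:R : R) = (count P s)%:R.
Proof. by elim: s => [|z s IH]; rewrite ?big_nil // big_cons IH natrD. Qed.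

Lemma sumr_const_seq (T : Type) (V : nmodType) (s : seq T) (c : V) :
  \sum_(z <- s) c = c *+ size s.
Proof. by elim: s => [|z s IH]; rewrite ?big_nil // big_cons IH mulrS. Qed.

Section Spectrum.
Variables (T : finType) (e : rel T).

Lemma char_poly_adj : char_poly (adj_mx e) = \prod_(z <- spectrum e) ('X - z%:P).
Proof.
rewrite /spectrum; case: closed_field_poly_normal => r /= ->.
by rewrite (monicP (char_poly_monic _)) scale1r.
Qed.

Lemma size_spectrum : size (spectrum e) = #|T|.
Proof.
by have := size_char_poly (adj_mx e); rewrite char_poly_adj size_prod_XsubC => -[].
Qed.

Lemma horner_char_poly_adj x :
  (char_poly (adj_mx e)).[x] = \prod_(z <- spectrum e) (x - z).
Proof. by rewrite char_poly_adj horner_prod; apply: eq_bigr => z _; rewrite hornerXsubC. Qed.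

Lemma det_scalar_addmx_adj y :
  \det (y%:M + adj_mx e) = \prod_(z <- spectrum e) (y + z).
Proof.
have -> : y%:M + adj_mx e = - ((- y)%:M - adj_mx e).
  by rewrite opprB raddfN opprK addrC.
rewrite -scaleN1r detZ -horner_char_poly horner_char_poly_adj -size_spectrum.
elim: (spectrum e) => [|z s IH]; first by rewrite !big_nil mulr1.
by rewrite !big_cons /= exprS -IH; ring.
Qed.

Lemma spectrumP l : l \in spectrum e <->
  exists2 v : T -> algC, (exists x, v x != 0) &
    forall y, \sum_x (e x y)%:R * v x = l * v y.
Proof.
rewrite -root_prod_XsubC -char_poly_adj -eigenvalue_root_char; split.
  case/eigenvalueP => v vA v_neq0; exists (fun x => v 0 (enum_rank x)).
    have /existsP [j vj] : [exists j, v 0 j != 0].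
      apply: contraR v_neq0 => /existsPn v0.
      by apply/eqP/rowP => j; rewrite mxE; apply/eqP/negbNE/v0.
    by exists (enum_val j); rewrite enum_valK.
  move=> y; move/rowP: vA => /(_ (enum_rank y)); rewrite !mxE => <-.
  rewrite [RHS](reindex enum_rank); last exact/onW_bij/enum_rank_bij.
  by apply: eq_bigr => x _; rewrite !mxE !enum_rankK mulrC.
case=> v [x0 vx0] vA; apply/eigenvalueP; exists (\row_j v (enum_val j)).
  apply/rowP => j; rewrite !mxE -vA (reindex enum_rank); last exact/onW_bij/enum_rank_bij.
  by apply: eq_bigr => x _; rewrite !mxE !enum_rankK mulrC.
apply/eqP => /rowP /(_ (enum_rank x0)); rewrite !mxE enum_rankK => /eqP.
by rewrite (negPf vx0).
Qed.

End Spectrum.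

Section Regular.
Variables (T : finType) (e : rel T) (k : nat).
Hypothesis e_simple : simple_graph e.
Hypothesis e_regular : forall x, #|[set y | e x y]| = k.

Lemma adj_compl : adj_mx (compl_graph e) = const_mx 1 - 1%:M - adj_mx e.
Proof.
have [_ e_irr] := e_simple; apply/matrixP => i j; rewrite !mxE /compl_graph.
have [<-|ij] := eqVneq i j; first by rewrite eqxx (negPf (e_irr _)) subrr subr0.
by rewrite (inj_eq enum_val_inj) ij; case: (e _ _); rewrite ?subr0 ?subrr ?sub0r.
Qed.

Lemma adj_mul_const : adj_mx e *m const_mx 1 = k%:R *: (const_mx 1 : 'M_#|T|).
Proof.
apply/matrixP => i j; rewrite !mxE mulr1 -(e_regular (enum_val i)) -sumr_natr_card.
rewrite (reindex enum_rank); last exact/onW_bij/enum_rank_bij.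
by apply: eq_bigr => y _; rewrite !mxE enum_rankK mulr1.
Qed.

Lemma degree_lt_card : (0 < #|T|)%N -> (k < #|T|)%N.
Proof.
case/card_gt0P => x _; have [_ e_irr] := e_simple; rewrite -(e_regular x).
rewrite -cardsT; apply/proper_card/properP; split; first exact: subsetT.
by exists x; rewrite !inE ?e_irr.
Qed.

Lemma degree_in_spectrum : (0 < #|T|)%N -> k%:R \in spectrum e.
Proof.
case/card_gt0P => x0 _; have [e_sym _] := e_simple.
apply/spectrumP; exists (fun _ => 1); first by exists x0; rewrite oner_eq0.
move=> y; under eq_bigr do rewrite mulr1.
by rewrite mulr1 sumr_natr_card -(e_regular y); congr _%:R; apply: eq_card => x;
  rewrite !inE e_sym.
Qed.

(* With M = (x + 1) I + A and c = x + 1 + k we have M J = c J, and J has rank one,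
   so det (M - J) = det M * (1 - n / c). *)
Lemma horner_char_poly_compl x : (0 < #|T|)%N ->
  (char_poly (adj_mx (compl_graph e))).[x] * (x + 1 + k%:R) =
  (x + 1 + k%:R - #|T|%:R) * \prod_(z <- spectrum e) (x + 1 + z).
Proof.
move=> T_gt0; set c := x + 1 + k%:R.
have [c0|c_neq0] := eqVneq c 0.
  rewrite (perm_big _ (perm_to_rem (degree_in_spectrum T_gt0))) big_cons /= -/c c0.
  by rewrite !(mul0r, mulr0).
rewrite horner_char_poly; set J := const_mx 1 : 'M[algC]_#|T|; set M := (x + 1)%:M + adj_mx e.
have -> : x%:M - adj_mx (compl_graph e) = M *m (1%:M - c^-1 *: J).
  have MJ : M *m J = c *: J by rewrite mulmxDl mul_scalar_mx adj_mul_const -scalerDl.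
  rewrite mulmxBr mulmx1 -scalemxAr MJ scalerA mulVf // scale1r adj_compl.
  by apply/matrixP => i j; rewrite !mxE; ring.
have -> : 1%:M - c^-1 *: J = 1%:M + (- c^-1 *: const_mx 1 : 'cV_#|T|) *m const_mx 1.
  rewrite -scalemxAl scaleNr; congr (_ - _ *: _).
  by apply/matrixP => i j; rewrite !mxE big_ord1 !mxE mulr1.
rewrite det_mulmx det_add1_mulmx det_scalar_addmx_adj mxE.
rewrite [X in 1 + X](eq_bigr (fun _ => - c^-1)) => [|j _]; last by rewrite !mxE mulr1 mul1r.
by rewrite sumr_const card_ord -mulr_natr; field.
Qed.

Lemma spectrum_compl : (0 < #|T|)%N ->
  perm_eq (spectrum (compl_graph e))
    ((#|T|%:R - 1 - k%:R) :: map (fun z => -1 - z) (rem k%:R (spectrum e))).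
Proof.
move=> T_gt0; have kS := degree_in_spectrum T_gt0.
apply: prod_XsubC_eq; rewrite big_cons big_map -char_poly_adj.
apply: (@mulIf _ ('X - (-1 - k%:R)%:P)); first by rewrite polyXsubC_eq0.
apply: horner_inj => x.
rewrite !hornerM !hornerXsubC horner_prod.
have -> : x - (-1 - k%:R) = x + 1 + k%:R by ring.
rewrite horner_char_poly_compl // (perm_big _ (perm_to_rem kS)) big_cons /=.
rewrite [in RHS](eq_bigr (fun z => x + 1 + z)) => [|z _]; last by rewrite hornerXsubC; ring.
ring.
Qed.

Lemma integral_compl : (0 < #|T|)%N -> integral_graph e -> integral_graph (compl_graph e).
Proof.
move=> T_gt0 /allP e_int; apply/allP => z.
rewrite (perm_mem (spectrum_compl T_gt0)) inE => /orP [/eqP -> | /mapP [w /mem_rem w_e ->]].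
  by rewrite !rpredB ?natr_int ?rpred1.
by rewrite rpredB ?rpredN ?rpred1 ?e_int.
Qed.

Lemma not_isospectral_compl : (0 < #|T|)%N ->
  #|T|%:R - 1 - k%:R \notin spectrum e -> ~ isospectral e (compl_graph e).
Proof.
move=> T_gt0 notin iso; apply/negP: notin.
by rewrite (perm_mem iso) (perm_mem (spectrum_compl T_gt0)) mem_head.
Qed.

End Regular.

Section Bipartite.
Variables (T : finType) (e : rel T) (B : {set T}).
Hypothesis e_simple : simple_graph e.
Hypothesis e_bip : forall x y, e x y -> (x \in B) != (y \in B).

(* Conjugating by the diagonal sign matrix of the bipartition turns A into -A. *)
Lemma perm_spectrum_opp : perm_eq (spectrum e) (map -%R (spectrum e)).
Proof.
apply: prod_XsubC_eq; rewrite -char_poly_adj; apply: horner_inj => x.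
rewrite big_map horner_prod; under eq_bigr do rewrite hornerXsubC opprK.
rewrite -det_scalar_addmx_adj horner_char_poly.
pose D : 'M[algC]_#|T| := diag_mx (\row_i (-1) ^+ (enum_val i \notin B)).
have DD : D *m D = 1%:M.
  rewrite mulmx_diag -diag_const_mx; congr diag_mx; apply/rowP => i.
  by rewrite !mxE -expr2 sqrr_sign.
have -> : x%:M + adj_mx e = D *m (x%:M - adj_mx e) *m D.
  have [_ e_irr] := e_simple; apply/matrixP => i j.
  rewrite mul_mx_diag mul_diag_mx !mxE.
  have [<-|ij] := eqVneq i j.
    by rewrite (negPf (e_irr _)) !subr0 addr0 mulrAC -expr2 sqrr_sign mul1r.
  rewrite !mulr0n add0r sub0r; case e_ij: (e _ _); last by rewrite oppr0 mulr0 mul0r.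
  by move: (e_bip e_ij); case: (_ \in B); case: (_ \in B) => //= _; ring.
by rewrite !det_mulmx mulrAC -det_mulmx DD det1 mul1r.
Qed.

End Bipartite.

Definition energy_defect (z : algC) := `|1 + z| + `|1 - z| - 2 * `|z|.

Lemma energy_defect_ge0 z : 0 <= energy_defect z.
Proof.
rewrite subr_ge0 -[2](@normr_nat algC 2) -normrM.
by have := ler_normB (1 + z) (1 - z); rewrite (_ : 1 + z - (1 - z) = 2 * z) //; ring.
Qed.

Lemma energy_defect0 : energy_defect 0 = 2.
Proof. by rewrite /energy_defect addr0 subr0 normr0 normr1 mulr0 subr0. Qed.

Lemma energy_defectN z : energy_defect (- z) = energy_defect z.
Proof. by rewrite /energy_defect opprK normrN [`|1 - z| + _]addrC. Qed.

Lemma energy_defect_nat m : (0 < m)%N -> energy_defect m%:R = 0.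
Proof.
move=> m_gt0; rewrite /energy_defect -[`|1 - _|]normrN opprB.
have -> : m%:R - 1 = (m - 1)%:R :> algC by rewrite natrB.
have -> : 1 + m%:R = (1 + m)%:R :> algC by rewrite natrD.
by rewrite !normr_nat natrB // natrD; ring.
Qed.

Lemma sum_energy_defect_ge0 (s : seq algC) : 0 <= \sum_(z <- s) energy_defect z.
Proof. by apply: sumr_ge0 => z _; apply: energy_defect_ge0. Qed.

Lemma sum_other_side (T : finType) (V : nmodType) (B : {set T}) (v : T -> V) y :
  \sum_(x | (x \in B) != (y \in B)) v x =
  if y \in B then \sum_(x in ~: B) v x else \sum_(x in B) v x.
Proof. by case: (y \in B); apply: eq_bigl => x; rewrite ?inE; case: (x \in B). Qed.

Lemma sum_same_side (T : finType) (V : nmodType) (B : {set T}) (v : T -> V) y :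
  \sum_(x | (x \in B) == (y \in B)) v x =
  if y \in B then \sum_(x in B) v x else \sum_(x in ~: B) v x.
Proof. by case: (y \in B); apply: eq_bigl => x; rewrite ?inE; case: (x \in B). Qed.

Lemma swapped_sums_eq0 (R : idomainType) (l c a b : R) :
  l * a = c * b -> l * b = c * a -> (l == c) || (l == - c) || ((a == 0) && (b == 0)).
Proof.
move=> la lb; rewrite -eqf_sqr; have [//|sqr_neq] := eqVneq; rewrite -subr_eq0 in sqr_neq.
have: (l ^+ 2 - c ^+ 2) * a == 0 by rewrite mulrBl expr2 -mulrA la mulrCA lb; apply/eqP; ring.
have: (l ^+ 2 - c ^+ 2) * b == 0 by rewrite mulrBl expr2 -mulrA lb mulrCA la; apply/eqP; ring.
by rewrite !mulf_eq0 (negPf sqr_neq) => /= -> ->.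
Qed.

Lemma C4_odd (i j : 'I_4) : C4 i j = (odd i != odd j).
Proof. by case: i => [[|[|[|[|i]]]] ?] //; case: j => [[|[|[|[|j]]]] ?]. Qed.

Lemma C4_regular i : #|[set j | C4 i j]| = 2.
Proof.
rewrite cardsE -sum1_card big_mkcond !big_ord_recl big_ord0 /=.
by case: i => [[|[|[|[|i]]]] ?].
Qed.

Lemma crown_regular t u : #|[set v | crown t u v]| = t.-1.
Proof.
have -> : [set v | crown t u v] = setX [set~ u.1] [set~ u.2].
  by apply/setP => -[b j]; rewrite !inE /crown /= ![_ == u.1]eq_sym ![_ == u.2]eq_sym.
by rewrite cardsX !cardsC1 card_bool card_ord mul1n.
Qed.

Lemma graph_iso_regular (T S : finType) (e : rel T) (f : rel S) d :
  graph_iso e f -> (forall u, #|[set w | f u w]| = d) ->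
  (forall x, #|[set y | e x y]| = d) /\ #|T| = #|S|.
Proof.
move=> [g [g_bij e_f]] f_reg; split; last exact: bij_eq_card g_bij.
move=> x; rewrite -(f_reg (g x)) -(on_card_preimset (onW_bij _ g_bij)).
by apply: eq_card => y; rewrite !inE e_f.
Qed.

Section CompleteBipartite.
Variables (T : finType) (e : rel T) (B : {set T}) (m : nat).
Hypothesis e_complete : forall x y, e x y = ((x \in B) != (y \in B)).
Hypothesis card_B : #|B| = m.
Hypothesis card_CB : #|~: B| = m.

Lemma complete_bipartite_eigen l : l \in spectrum e ->
  [|| l == 0, l == m%:R | l == - m%:R].
Proof.
case/spectrumP => v [x0 vx0] vA.
pose a := \sum_(x in B) v x; pose b := \sum_(x in ~: B) v x.
have vA' y : l * v y = if y \in B then b else a.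
  by rewrite -vA sumr_indicator; under eq_bigl do rewrite e_complete; rewrite sum_other_side.
have la : l * a = m%:R * b.
  by rewrite mulr_sumr mulr_natl -card_B -sumr_const; apply: eq_bigr => y yB; rewrite vA' yB.
have lb : l * b = m%:R * a.
  rewrite mulr_sumr mulr_natl -card_CB -sumr_const; apply: eq_bigr => y.
  by rewrite inE vA' => /negPf ->.
case/orP: (swapped_sums_eq0 la lb) => [-> | /andP [/eqP a0 /eqP b0]]; first by rewrite orbT.
by move: (vA' x0); rewrite a0 b0 if_same => /eqP; rewrite mulf_eq0 (negPf vx0) orbF => ->.
Qed.

Lemma complete_bipartite_compl_eigen l : l \in spectrum (compl_graph e) ->
  (l == -1) || (l == m%:R - 1).
Proof.
case/spectrumP => v [x0 vx0] vA.
pose a := \sum_(x in B) v x; pose b := \sum_(x in ~: B) v x.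
have vA' y : (l + 1) * v y = if y \in B then a else b.
  rewrite /a /b -sum_same_side (bigD1 y) //= addrC mulrDl mul1r -vA sumr_indicator.
  by congr (_ + _); apply: eq_bigl => x; rewrite /compl_graph e_complete negbK andbC.
have [lm|lm] := eqVneq (l + 1) m%:R; first by rewrite -lm addrK eqxx orbT.
have side_eq0 c : (l + 1) * c = m%:R * c -> c = 0.
  by move/eqP; rewrite -subr_eq0 -mulrBl mulf_eq0 subr_eq0 (negPf lm) => /eqP.
have a0 : a = 0.
  apply: side_eq0; rewrite mulr_sumr mulr_natl -card_B -sumr_const.
  by apply: eq_bigr => y yB; rewrite vA' yB.
have b0 : b = 0.
  apply: side_eq0; rewrite mulr_sumr mulr_natl -card_CB -sumr_const.
  by apply: eq_bigr => y; rewrite inE vA' => /negPf ->.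
move: (vA' x0); rewrite a0 b0 if_same => /eqP.
by rewrite mulf_eq0 (negPf vx0) orbF addr_eq0 => ->.
Qed.

Lemma complete_bipartite_simple : simple_graph e.
Proof. by split=> [x y|x]; rewrite !e_complete ?eqxx // eq_sym. Qed.

Lemma complete_bipartite_regular x : #|[set y | e x y]| = m.
Proof.
case xB: (x \in B); [rewrite -card_CB | rewrite -card_B];
  by apply: eq_card => y; rewrite !inE e_complete xB; case: (y \in B).
Qed.

Lemma card_complete_bipartite : #|T| = (m + m)%N.
Proof. by rewrite -(cardsC B) card_B card_CB. Qed.

(* A second eigenvalue m would give the eigenvalue -1 - m of the complement. *)
Lemma count_complete_bipartite_degree : (0 < m)%N -> count_mem m%:R (spectrum e) = 1%N.
Proof.
move=> m_gt0; have T_gt0 : (0 < #|T|)%N by rewrite card_complete_bipartite addn_gt0 m_gt0.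
have e_simple := complete_bipartite_simple; have e_reg := complete_bipartite_regular.
rewrite (permP (perm_to_rem (degree_in_spectrum e_simple e_reg T_gt0))) /= eqxx.
rewrite add1n; congr _.+1; apply/count_memPn/negP => m_rem.
have : -1 - m%:R \in spectrum (compl_graph e).
  by rewrite (perm_mem (spectrum_compl e_simple e_reg T_gt0)) inE; apply/orP; right;
    apply/mapP; exists m%:R.
have m_neq0 n : (0 < n)%N -> (- (n%:R) == 0 :> algC) = false.
  by move=> n_gt0; rewrite oppr_eq0 pnatr_eq0 eqn0Ngt n_gt0.
case/complete_bipartite_compl_eigen/orP; rewrite -subr_eq0.
  by rewrite (_ : -1 - m%:R - -1 = - m%:R) ?m_neq0 //; ring.
by rewrite (_ : -1 - m%:R - (m%:R - 1) = - (m + m)%:R) ?m_neq0 ?addn_gt0 ?m_gt0 // natrD; ring.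
Qed.

Lemma complete_bipartite_defect_sum : (0 < m)%N ->
  \sum_(z <- spectrum e) energy_defect z + 4 = (4 * m)%:R.
Proof.
move=> m_gt0; have c_m := count_complete_bipartite_degree m_gt0.
have e_bip x y : e x y -> (x \in B) != (y \in B) by rewrite e_complete.
have c_Nm : count_mem (- m%:R) (spectrum e) = 1%N.
  rewrite (permP (perm_spectrum_opp complete_bipartite_simple e_bip)) count_map -c_m.
  by apply: eq_count => z /=; rewrite eqr_opp.
have m_neq0 : (m == 0)%N = false by rewrite eqn0Ngt m_gt0.
rewrite (eq_big_seq (fun z => 2 - 2 * (z == m%:R)%:R - 2 * (z == - m%:R)%:R)); last first.
  move=> z /complete_bipartite_eigen /or3P [] /eqP ->.
  - rewrite energy_defect0 ![0 == _]eq_sym oppr_eq0 pnatr_eq0 m_neq0 /= mulr0n; ring.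
  - rewrite energy_defect_nat // eqxx eqr_natN addn_eq0 m_neq0 /= mulr0n mulr1n; ring.
  - rewrite energy_defectN energy_defect_nat // eqxx eq_sym eqr_natN addn_eq0 m_neq0 /=.
    by rewrite mulr0n mulr1n; ring.
rewrite !sumrB -!mulr_sumr !sumr_count c_m c_Nm sumr_const_seq size_spectrum.
by rewrite card_complete_bipartite mulr_natr !natrD; ring.
Qed.

Lemma complete_bipartite_iso_C4 : m = 2 -> graph_iso e C4.
Proof.
move=> m2; have card_B2 : #|B| = 2 by rewrite card_B.
have card_CB2 : #|~: B| = 2 by rewrite card_CB.
have [a0 a0B] : exists a0, a0 \in B by apply/card_gt0P; rewrite card_B2.
have [b0 b0B] : exists b0, b0 \in ~: B by apply/card_gt0P; rewrite card_CB2.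
pose r x : nat := if x \in B then (enum_rank_in a0B x).*2 else (enum_rank_in b0B x).*2.+1.
have r_lt4 x : (r x < 4)%N.
  rewrite /r; case: (x \in B).
    by have := ltn_ord (enum_rank_in a0B x); move: (nat_of_ord _); rewrite card_B2; lia.
  by have := ltn_ord (enum_rank_in b0B x); move: (nat_of_ord _); rewrite card_CB2; lia.
have odd_r x : odd (r x) = (x \notin B) by rewrite /r; case: (x \in B); rewrite /= odd_double.
exists (fun x => inord (r x)); split.
  apply: inj_card_bij; last by rewrite card_ord card_complete_bipartite m2.
  move=> x y /(congr1 val); rewrite /= !inordK // => rxy.
  have sameB : (x \in B) = (y \in B) by apply: negb_inj; rewrite -!odd_r rxy.
  move: rxy; rewrite /r sameB; case yB: (y \in B) => rxy.
    have xB : x \in B by rewrite sameB.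
    rewrite -(enum_rankK_in a0B xB) -(enum_rankK_in a0B yB).
    by congr enum_val; apply: val_inj; move/double_inj: rxy.
  have xB : x \in ~: B by rewrite inE sameB yB.
  have yB' : y \in ~: B by rewrite inE yB.
  rewrite -(enum_rankK_in b0B xB) -(enum_rankK_in b0B yB').
  by congr enum_val; apply: val_inj; case: rxy => /double_inj.
move=> x y; rewrite e_complete C4_odd !inordK // !odd_r.
by case: (x \in B); case: (y \in B).
Qed.

End CompleteBipartite.

Section Crown.
Variables (T : finType) (e : rel T) (B : {set T}) (nu : T -> T) (m : nat).
Hypothesis nu_side : forall x, (nu x \in B) != (x \in B).
Hypothesis nu_inv : involutive nu.
Hypothesis e_crown : forall x y, e x y = ((x \in B) != (y \in B)) && (y != nu x).
Hypothesis card_B : #|B| = m.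
Hypothesis card_CB : #|~: B| = m.

Lemma mem_nu x : (nu x \in B) = (x \notin B).
Proof. by move: (nu_side x); case: (nu x \in B); case: (x \in B). Qed.

Lemma crown_eigen l : l \in spectrum e ->
  [|| l == 1, l == -1, l == m%:R - 1 | l == 1 - m%:R].
Proof.
case/spectrumP => v [x0 vx0] vA.
pose a := \sum_(x in B) v x; pose b := \sum_(x in ~: B) v x.
have vA' y : l * v y = (if y \in B then b else a) - v (nu y).
  rewrite /a /b -sum_other_side (bigD1 (nu y)) ?nu_side //= addrC addrK.
  rewrite -vA sumr_indicator; apply: eq_bigl => x; rewrite e_crown.
  by congr (_ && _); rewrite eq_sym (can2_eq nu_inv nu_inv).
have sum_nu_B : \sum_(y in B) v (nu y) = b.
  by rewrite /b [RHS](reindex_inj (inv_inj nu_inv)); apply: eq_bigl => y; rewrite !inE mem_nu negbK.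
have sum_nu_CB : \sum_(y in ~: B) v (nu y) = a.
  by rewrite /a [RHS](reindex_inj (inv_inj nu_inv)); apply: eq_bigl => y; rewrite !inE mem_nu.
have la : l * a = (m%:R - 1) * b.
  rewrite mulr_sumr (eq_bigr (fun y => b - v (nu y))) => [|y yB]; last by rewrite vA' yB.
  by rewrite sumrB sumr_const card_B sum_nu_B -mulr_natl; ring.
have lb : l * b = (m%:R - 1) * a.
  rewrite mulr_sumr (eq_bigr (fun y => a - v (nu y))) => [|y]; last first.
    by rewrite inE vA' => /negPf ->.
  by rewrite sumrB sumr_const card_CB sum_nu_CB -mulr_natl; ring.
case/orP: (swapped_sums_eq0 la lb) => [/orP [] | /andP [/eqP a0 /eqP b0]].
- by move=> ->; rewrite !orbT.
- by rewrite opprB => ->; rewrite !orbT.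
have vN y : l * v y = - v (nu y) by rewrite vA' a0 b0 if_same sub0r.
have : (l ^+ 2 - 1) * v x0 == 0.
  by rewrite mulrBl expr2 -mulrA vN mulrN vN opprK nu_inv mul1r subrr.
by rewrite mulf_eq0 (negPf vx0) orbF subr_eq0 sqrf_eq1 => /orP [] ->; rewrite ?orbT.
Qed.

Lemma crown_iso : (0 < m)%N -> graph_iso e (crown m).
Proof.
rewrite -{1}card_B => /card_gt0P [a0 a0B].
pose rep x := if x \in B then x else nu x.
have repB x : rep x \in B by rewrite /rep; case: ifP => // /negbT; rewrite mem_nu.
pose r x := cast_ord card_B (enum_rank_in a0B (rep x)).
have r_eq x y : (r x == r y) = (rep x == rep y).
  rewrite /r (inj_eq (cast_ord_inj (eq_n := card_B))); apply/eqP/eqP => [rxy|->] //.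
  by rewrite -(enum_rankK_in a0B (repB x)) rxy enum_rankK_in.
exists (fun x => (x \in B, r x)); split.
  apply: inj_card_bij; last first.
    by rewrite card_prod card_bool card_ord -(cardsC B) card_B card_CB mul2n addnn.
  move=> x y [xyB rxy]; have /eqP : r x = r y by apply: val_inj.
  by rewrite r_eq /rep xyB; case: (y \in B) => /eqP // /(can_inj nu_inv).
move=> x y; rewrite e_crown /crown /= r_eq /rep.
case: (x \in B); case: (y \in B) => //=; last by rewrite eq_sym.
by rewrite eq_sym (can2_eq nu_inv nu_inv).
Qed.

End Crown.

Definition crown_or_C4_shape (n k : nat) : Prop :=
  (0 < k)%N /\ n = (2 * k.+1)%N \/ k = 2%N /\ n = 4%N.

Section RegularBipartite.
Variables (T : finType) (e : rel T) (k : nat) (B : {set T}).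
Hypothesis e_simple : simple_graph e.
Hypothesis e_regular : forall x, #|[set y | e x y]| = k.
Hypothesis e_bip : forall x y, e x y -> (x \in B) != (y \in B).

Local Notation other_side x := [set y | (y \in B) != (x \in B)].

Lemma neighbours_other_side x : [set y | e x y] \subset other_side x.
Proof. by apply/subsetP => y; rewrite !inE eq_sym => /e_bip. Qed.

Lemma card_other_side x : #|other_side x| = if x \in B then #|~: B| else #|B|.
Proof. by case: (x \in B); apply: eq_card => y; rewrite !inE //; case: (y \in B). Qed.

Lemma sum_degree_other_side x : (\sum_(y in other_side x) e x y)%N = k.
Proof.
rewrite -(e_regular x) -sum1_card [RHS]big_mkcond [LHS]big_mkcond /=.
apply: eq_bigr => y _; rewrite !inE; case exy: (e x y); last by case: ifP.
by rewrite eq_sym (e_bip exy).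
Qed.

Lemma card_sides_eq : (0 < k)%N -> #|B| = #|~: B|.
Proof.
move=> k_gt0; have [e_sym _] := e_simple.
apply/eqP; rewrite -(eqn_pmul2l k_gt0); apply/eqP.
transitivity (\sum_(x in B) \sum_(y in ~: B) (e x y : nat))%N.
  rewrite mulnC -sum_nat_const; apply: eq_bigr => x xB; rewrite -(sum_degree_other_side x).
  by apply: eq_bigl => y; rewrite !inE xB; case: (y \in B).
rewrite exchange_big mulnC -sum_nat_const; apply: eq_bigr => y; rewrite inE => yB.
rewrite -(sum_degree_other_side y); apply: eq_big => [x|x _]; last by rewrite e_sym.
by rewrite !inE (negPf yB); case: (x \in B).
Qed.

Hypothesis T_gt0 : (0 < #|T|)%N.

Lemma degree_le_side : (0 < k)%N -> (k <= #|B|)%N.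
Proof.
move=> k_gt0; have [x0 _] := card_gt0P T_gt0.
have := subset_leq_card (neighbours_other_side x0).
by rewrite e_regular card_other_side -(card_sides_eq k_gt0) if_same.
Qed.

Lemma card_regular_bipartite : (0 < k)%N -> #|T| = (#|B| + #|B|)%N.
Proof. by move=> k_gt0; rewrite -{1}(cardsC B) -card_sides_eq. Qed.

Lemma regular_bipartite_complete : (0 < k)%N -> k = #|B| ->
  forall x y, e x y = ((x \in B) != (y \in B)).
Proof.
move=> k_gt0 kB x y.
have card_eq : #|[set y | e x y]| = #|other_side x|.
  by rewrite e_regular card_other_side -card_sides_eq // -kB if_same.
by have := subset_cardP card_eq (neighbours_other_side x) y; rewrite !inE eq_sym.
Qed.

Lemma regular_bipartite_crown : (0 < k)%N -> k.+1 = #|B| ->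
  exists nu : T -> T, [/\ forall x, (nu x \in B) != (x \in B), involutive nu &
    forall x y, e x y = ((x \in B) != (y \in B)) && (y != nu x)].
Proof.
move=> k_gt0 kB; have [e_sym _] := e_simple.
pose D x := other_side x :\: [set y | e x y].
have card_D x : #|D x| == 1%N.
  rewrite cardsD (setIidPr (neighbours_other_side x)) card_other_side e_regular.
  by rewrite -card_sides_eq // if_same -kB subSnn.
pose nu x := odflt x [pick y in D x].
have D_nu x : D x = [set nu x].
  have [y Dy] := cards1P (card_D x); rewrite /nu Dy.
  by case: pickP => [z /set1P -> // | /(_ y)]; rewrite set11.
have nuP x y : (y \in B) != (x \in B) -> ~~ e x y = (y == nu x).
  by move=> yx; rewrite -in_set1 -D_nu !inE yx andbT.
have nu_side x : (nu x \in B) != (x \in B).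
  have : nu x \in D x by rewrite D_nu set11.
  by rewrite !inE => /andP [].
have nu_inv : involutive nu.
  move=> x; apply/eqP; rewrite eq_sym -nuP; last by rewrite eq_sym.
  by rewrite e_sym nuP // eqxx.
exists nu; split=> // x y.
have [xy|xy] := eqVneq (x \in B) (y \in B); last by rewrite -nuP ?negbK // eq_sym.
by apply/negbTE/negP => /e_bip; rewrite xy eqxx.
Qed.

Lemma energy_compl_eqP :
  energy e = energy (compl_graph e) <->
  (2 * #|T|)%:R + \sum_(z <- spectrum e) energy_defect z = (4 * k.+1)%:R.
Proof.
have kS := degree_in_spectrum e_simple e_regular T_gt0.
set S := spectrum e; set a := \sum_(z <- S) `|1 + z|.
have sum_1_sub : \sum_(z <- S) `|1 - z| = a.
  rewrite (perm_big _ (perm_spectrum_opp e_simple e_bip)) big_map.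
  by apply: eq_bigr => z _; rewrite opprK.
have compl_top : #|T|%:R - 1 - k%:R = (#|T| - k.+1)%:R :> algC.
  by rewrite natrB ?(degree_lt_card e_simple e_regular T_gt0) // mulrS; ring.
have energy_compl : energy (compl_graph e) = #|T|%:R - 1 - k%:R + a - (1 + k%:R).
  rewrite /energy (perm_big _ (spectrum_compl e_simple e_regular T_gt0)) big_cons /=.
  rewrite big_map compl_top normr_nat -compl_top /a (perm_big _ (perm_to_rem kS)) big_cons /=.
  rewrite [`|1 + k%:R|]ger0_norm ?addr_ge0 ?ler01 ?ler0n //.
  under eq_bigr do rewrite -normrN opprB opprK addrC.
  by ring.
have key : (energy (compl_graph e) - energy e) *+ 2 =
    (2 * #|T|)%:R + \sum_(z <- S) energy_defect z - (4 * k.+1)%:R.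
  rewrite /energy_defect !sumrB big_split /= sum_1_sub -mulr_sumr energy_compl.
  by rewrite -/S -/a /energy !natrM mulrS; ring.
split=> [E|E]; first by apply/eqP; rewrite -subr_eq0 -key E subrr mul0rn.
have : (energy (compl_graph e) - energy e) *+ 2 == 0 by rewrite key E subrr.
by rewrite mulrn_eq0 /= subr_eq0 eq_sym => /eqP.
Qed.

Lemma energy_compl_eq_crown_or_C4_shape : (1 < #|T|)%N ->
  energy e = energy (compl_graph e) -> crown_or_C4_shape #|T| k.
Proof.
move=> T_gt1 /energy_compl_eqP.
have card_T := card_regular_bipartite.
set n := #|T| in T_gt1 card_T *.
have [k0|k_gt0] := posnP k.
  have kS := degree_in_spectrum e_simple e_regular T_gt0.
  rewrite (perm_big _ (perm_to_rem kS)) big_cons /= k0 energy_defect0 addrA -natrD.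
  by move/(natr_addr_ge0_eq_leq (sum_energy_defect_ge0 _)) => ?; exfalso; lia.
move/(_ k_gt0) in card_T.
have [k_lt|[kB|kB]] : (k.+2 <= #|B|)%N \/ k.+1 = #|B| \/ k = #|B|.
  by have := degree_le_side k_gt0; lia.
- by move/(natr_addr_ge0_eq_leq (sum_energy_defect_ge0 _)) => ?; exfalso; lia.
- by left; split=> //; lia.
have e_complete := regular_bipartite_complete k_gt0 kB.
have card_CB : #|~: B| = k by rewrite -(card_sides_eq k_gt0).
move: (complete_bipartite_defect_sum e_complete (esym kB) card_CB k_gt0) => sum_defect E.
have : (2 * #|T| + 4 * k)%:R = (4 * k.+1 + 4)%:R :> algC.
  by rewrite natrD [in RHS]natrD -E -sum_defect; ring.
by move/eqP; rewrite eqr_nat => /eqP; right; lia.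
Qed.

Lemma iso_crown_or_C4_shape :
  graph_iso e C4 \/ (exists t, (2 <= t)%N /\ graph_iso e (crown t)) ->
  crown_or_C4_shape #|T| k.
Proof.
have [x0 _] := card_gt0P T_gt0.
case=> [iso | [t [t_ge2 iso]]].
  have [deg card_T] := graph_iso_regular iso C4_regular.
  by right; rewrite -(e_regular x0) deg card_T card_ord.
have [deg card_T] := graph_iso_regular iso (@crown_regular t).
left; rewrite -(e_regular x0) deg card_T card_prod card_bool card_ord; lia.
Qed.

Lemma crown_shape_properties : (0 < k)%N -> #|T| = (2 * k.+1)%N ->
  [/\ energy e = energy (compl_graph e),
      exists t, (2 <= t)%N /\ graph_iso e (crown t),
      integral_graph e, integral_graph (compl_graph e)
    & ~ isospectral e (compl_graph e)].
Proof.
move=> k_gt0 card_T.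
have kB : k.+1 = #|B|.
  by have := card_regular_bipartite k_gt0; rewrite card_T; lia.
have card_CB : #|~: B| = k.+1 by rewrite -(card_sides_eq k_gt0).
have [nu [nu_side nu_inv e_crown]] := regular_bipartite_crown k_gt0 kB.
have eig z : z \in spectrum e -> z \in [:: 1; -1; k%:R; - k%:R].
  move/(crown_eigen nu_side nu_inv e_crown (esym kB) card_CB).
  have -> : k.+1%:R - 1 = k%:R :> algC by rewrite mulrS addrC addrK.
  have -> : 1 - k.+1%:R = - k%:R :> algC by rewrite mulrS opprD addNKr.
  by rewrite !inE.
have defect_sum0 : \sum_(z <- spectrum e) energy_defect z = 0.
  have defect1 : energy_defect 1 = 0 := energy_defect_nat (ltn0Sn 0).
  rewrite big_seq big1 // => z /eig; rewrite !inE => /or4P [] /eqP ->;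
    by rewrite ?energy_defectN ?defect1 ?energy_defect_nat.
have e_int : integral_graph e.
  by apply/allP => z /eig; rewrite !inE => /or4P [] /eqP ->; rewrite ?rpredN ?rpred1 ?natr_int.
split=> //.
- by apply/energy_compl_eqP; rewrite defect_sum0 addr0 card_T mulnA.
- by exists k.+1; split; [lia | apply: crown_iso nu_side nu_inv e_crown (esym kB) card_CB _].
- exact: integral_compl.
apply: not_isospectral_compl => //; apply/negP => /eig.
rewrite (_ : _ - 1 - _ = k.+1%:R); last by rewrite card_T natrM !mulrS; ring.
rewrite !inE -[1]/(1%:R) !eqr_nat !eqr_natN.
by case/or4P => /eqP; lia.
Qed.

Lemma C4_shape_properties : k = 2%N -> #|T| = 4%N ->
  [/\ energy e = energy (compl_graph e), graph_iso e C4,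
      integral_graph e, integral_graph (compl_graph e)
    & ~ isospectral e (compl_graph e)].
Proof.
move=> k2 card_T; have k_gt0 : (0 < k)%N by rewrite k2.
have kB : k = #|B|.
  by have := card_regular_bipartite k_gt0; rewrite card_T; lia.
have card_CB : #|~: B| = k by rewrite -(card_sides_eq k_gt0).
have e_complete := regular_bipartite_complete k_gt0 kB.
have eig z : z \in spectrum e -> z \in [:: 0; 2; -2].
  by move/(complete_bipartite_eigen e_complete (esym kB) card_CB); rewrite k2 !inE.
have e_int : integral_graph e.
  by apply/allP => z /eig; rewrite !inE => /or3P [] /eqP ->; rewrite ?rpredN ?rpred0 ?natr_int.
split=> //.
- apply/energy_compl_eqP; apply: (addIr (4 : algC)).
  rewrite -addrA (complete_bipartite_defect_sum e_complete (esym kB) card_CB k_gt0).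
  by rewrite card_T k2 -!natrD.
- exact: complete_bipartite_iso_C4 e_complete (esym kB) card_CB k2.
- exact: integral_compl.
apply: not_isospectral_compl => //; apply/negP => /eig.
rewrite card_T k2 (_ : _ - 1 - _ = 1); last by ring.
by rewrite !inE oner_eq0 -[1]/(1%:R) eqr_nat eqr_natN.
Qed.

End RegularBipartite.

Theorem mainTheorem4 (T : finType) (e : rel T) :
  simple_graph e -> (2 <= #|T|)%N -> regular_graph e -> bipartite_graph e ->
  ((energy e = energy (compl_graph e)) <->
     (graph_iso e C4 \/ exists t : nat, (2 <= t)%N /\ graph_iso e (crown t)))
  /\
  ((graph_iso e C4 \/ exists t : nat, (2 <= t)%N /\ graph_iso e (crown t)) ->
     [/\ integral_graph e, integral_graph (compl_graph e)
       & ~ isospectral e (compl_graph e)]).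
Proof.
move=> e_simple T_ge2 [k e_reg] [B e_bip].
have T_gt0 : (0 < #|T|)%N by apply: leq_trans T_ge2.
have E_shape := energy_compl_eq_crown_or_C4_shape e_simple e_reg e_bip T_gt0 T_ge2.
have P_shape := iso_crown_or_C4_shape e_reg T_gt0.
have shape_props : crown_or_C4_shape #|T| k ->
    [/\ energy e = energy (compl_graph e),
        graph_iso e C4 \/ exists t : nat, (2 <= t)%N /\ graph_iso e (crown t)
      & [/\ integral_graph e, integral_graph (compl_graph e)
          & ~ isospectral e (compl_graph e)]].
  case=> [[k_gt0 card_T] | [k2 card_T]].
    have [] := crown_shape_properties e_simple e_reg e_bip T_gt0 k_gt0 card_T.
    by split=> //; right.
  have [] := C4_shape_properties e_simple e_reg e_bip T_gt0 k2 card_T.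
  by split=> //; left.
split; first by split=> [/E_shape | /P_shape] /shape_props [].
by move=> /P_shape /shape_props [].
Qed.
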